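(* Let $k$ be a positive integer and $T$ a tree that is not a path, such that $T$ has no vertex of degree two and no major vertex of terminal degree zero. Then: $O_{R,k}(T)=\mathcal{B}$ if $|M_4(T)|\ge1$ or $|M_3(T)|\ge2$ (for all $k\ge1$), or if $M_4(T)=\emptyset$, $|M_3(T)|=1$, $|M_2(T)|\ge2$ and $k=1$, or if $M_4(T)=M_3(T)=\emptyset$, $|M_2(T)|\ge4$ and $k=1$; $O_{R,k}(T)=\mathcal{N}$ if $M_4(T)=\emptyset$, $|M_3(T)|=1$, $|M_2(T)|\in\{0,1\}$ and $k=1$, or if $M_4(T)=\emptyset$ and $|M_3(T)|=1$ and $k\ge2$, or if $M_4(T)=M_3(T)=\emptyset$, $|M_2(T)|=3$ and $k=1$; $O_{R,k}(T)=\mathcal{M}$ if $M_4(T)=M_3(T)=\emptyset$, $|M_2(T)|=2$ and $k=1$, or if $M_4(T)=M_3(T)=\emptyset$, $M_2(T)\ne\emptyset$ and $k\ge2$.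
   Context: A major vertex is a vertex of degree at least $3$; a leaf has degree $1$. In a tree $T$, a leaf $\ell$ is a terminal vertex of a major vertex $v$ if $d(\ell,v)<d(\ell,w)$ for every other major vertex $w$. The terminal degree $ter_T(v)$ of a major vertex $v$ is its number of terminal vertices; an exterior major vertex is a major vertex of positive terminal degree. $M(T)$ is the set of exterior major vertices; $M_i(T)=\{w\in M(T):ter_T(w)=i\}$ for $i=1,2,3$, and $M_4(T)=\{w\in M(T):ter_T(w)\ge4\}$. $d$ is the shortest-path distance and $d_k(x,y)=\min\{d(x,y),k+1\}$; a set $S$ is a distance-$k$ resolving set if for all distinct $x,y$ some $z\in S$ has $d_k(x,z)\ne d_k(y,z)$. In the Maker-Breaker distance-$k$ resolving game, Maker and Breaker alternately select a not-yet-chosen vertex; Maker wins if his selected vertices form a distance-$k$ resolving set, Breaker wins otherwise. $O_{R,k}(T)=\mathcal{M}$ if Maker has a winning strategy whether he moves first or second, $\mathcal{B}$ if Breaker has a winning strategy whether she moves first or second, $\mathcal{N}$ if the first player has a winning strategy. *)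

(* finite simple graphs as symmetric irreflexive relations on a finType. *)
From mathcomp Require Import all_boot.
Set Implicit Arguments. Unset Strict Implicit. Unset Printing Implicit Defensive.

Section Graphs.
Variables (T : finType) (e : rel T).

Definition deg (v : T) : nat := #|[set w | e v w]|.

Definition is_tree : Prop :=
  (forall x y : T, connect e x y) /\
  (forall c : seq T, uniq c -> 2 < size c -> ~~ cycle e c).

Definition is_path_graph : Prop :=
  exists s : seq T, perm_eq s (enum T) /\
    forall x y, e x y = ((x, y) \in zip s (behead s)) || ((y, x) \in zip s (behead s)).

Fixpoint reach (n : nat) (x : T) : {set T} :=
  match n with
  | 0 => [set x]
  | n'.+1 => reach n' x :|: [set y | [exists z in reach n' x, e z y]]
  end.

(* shortest-path distance (graph assumed connected) *)
Definition dist (x y : T) : nat := find (fun n => y \in reach n x) (iota 0 #|T|).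

Definition dist_k (k : nat) (x y : T) : nat := minn (dist x y) k.+1.

Definition major (v : T) : bool := 3 <= deg v.
Definition leaf (v : T) : bool := deg v == 1.

Definition terminal_of (l v : T) : bool :=
  [&& leaf l, major v & [forall w, (major w && (w != v)) ==> (dist l v < dist l w)]].

Definition ter (v : T) : nat := #|[set l | terminal_of l v]|.

Definition exterior_major (v : T) : bool := major v && (0 < ter v).

Definition Mset (i : nat) : {set T} :=
  [set w | exterior_major w && (if i == 4 then 4 <= ter w else ter w == i)].

Definition resolving_k (k : nat) (S : {set T}) : bool :=
  [forall x, forall y, (x != y) ==> [exists z in S, dist_k k x z != dist_k k y z]].

(* Maker-Breaker game: M = Maker's vertices, B = Breaker's vertices;
   mturn = true when Maker is to move.
   Fuel n bounds the number of remaining moves (#|T| suffices). *)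
Fixpoint maker_wins (k n : nat) (M B : {set T}) (mturn : bool) : bool :=
  match n with
  | 0 => resolving_k k M
  | n'.+1 =>
      if ~: (M :|: B) == set0 then resolving_k k M else
      if mturn then [exists v in ~: (M :|: B), maker_wins k n' (v |: M) B false]
      else [forall v in ~: (M :|: B), maker_wins k n' M (v |: B) true]
  end.

Definition maker_wins_first (k : nat) : bool := maker_wins k #|T| set0 set0 true.
Definition maker_wins_second (k : nat) : bool := maker_wins k #|T| set0 set0 false.

End Graphs.

Inductive outcome := OutM | OutB | OutN | OutP.

(* O_{R,k}: M if Maker wins moving first and second; B if Breaker wins moving
   first and second; N if the first player wins; P (previous player) otherwise *)
Definition O_Rk (T : finType) (e : rel T) (k : nat) : outcome :=
  let m1 := maker_wins_first e k in
  let m2 := maker_wins_second e k in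
  if m1 && m2 then OutM
  else if ~~ m1 && ~~ m2 then OutB
  else if m1 then OutN else OutP.

From mathcomp Require Import all_boot fingroup perm zify.
Set Implicit Arguments. Unset Strict Implicit. Unset Printing Implicit Defensive.

(* Under the hypotheses every vertex is a leaf or a major vertex, every leaf hangs
   on a major vertex, and the terminal vertices of a major vertex are exactly its
   pendant leaves, so M_i collects the major vertices with i pendants. Two pendants
   of one vertex are told apart only by a set containing one of them; for k = 1,
   pendants a, b of distinct vertices v, w only by a set meeting {a, v, b, w}.
   Maker wins by pairing: a vertex with a single pendant is paired with it, the
   first two pendants of any other vertex with each other, and, for k = 1, the two
   remaining vertices with several pendants with each other; moving first, he
   opens with the third pendant of the M_3 vertex (or with a third M_2 vertex).
   Breaker wins by claiming two pendants of one vertex, or, for k = 1, two vertices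
   each with one of its pendants; the positions from which she can force this form
   an invariant preserved by the moves of both players. *)

Local Notation free M B := (~: (M :|: B)).

(** * Distances and pendant vertices *)

Section Distance.
Variables (T : finType) (e : rel T).

Lemma reach_self n x : x \in reach e n x.
Proof. by elim: n => [|n IH] /=; rewrite !inE ?IH. Qed.

Lemma reach_mono m n x : m <= n -> reach e m x \subset reach e n x.
Proof.
elim: n => [|n IH]; first by rewrite leqn0 => /eqP ->.
rewrite leq_eqVlt ltnS => /orP[/eqP -> //|/IH sub_mn].
exact: subset_trans sub_mn (subsetUl _ _).
Qed.

Lemma reach1E x : reach e 1 x = x |: [set y | e x y].
Proof.
apply/setP=> y; rewrite /= !inE; congr (_ || _).
apply/existsP/idP => [[z /andP[]]|exy]; first by rewrite inE => /eqP ->.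
by exists x; rewrite inE eqxx.
Qed.

Lemma dist_leE m x z : m < #|T| -> (dist e x z <= m) = (z \in reach e m x).
Proof.
move=> m_lt; rewrite /dist; set p := fun n => z \in reach e n x.
apply/idP/idP => [le_m|z_m].
- have lt_find : find p (iota 0 #|T|) < #|T| by lia.
  have has_p : has p (iota 0 #|T|) by rewrite has_find size_iota.
  have := nth_find 0 has_p; rewrite nth_iota // add0n.
  exact: (subsetP (reach_mono x le_m)).
- rewrite leqNgt; apply/negP => lt_m.
  by have := before_find 0 lt_m; rewrite nth_iota // add0n /p z_m.
Qed.

End Distance.

Definition pendant (T : finType) (e : rel T) (v : T) : {set T} :=
  [set a | leaf e a && e v a].

Local Notation pcount e A v := #|pendant e v :&: A|.

Section Pendants.
Variables (T : finType) (e : rel T).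
Hypothesis e_sym : symmetric e.

Lemma leaf_majorF x : leaf e x -> major e x = false.
Proof. by rewrite /leaf /major => /eqP ->. Qed.

Lemma card_gt2_major v : major e v -> 2 < #|T|.
Proof. by move=> mv; apply: leq_trans mv (max_card _). Qed.

Lemma pendantP a v : reflect (leaf e a /\ e v a) (a \in pendant e v).
Proof. by rewrite inE; apply: andP. Qed.

Lemma pendant_majorF a v : a \in pendant e v -> major e a = false.
Proof. by case/pendantP => /leaf_majorF. Qed.

Lemma major_notin_pendant v x : major e x -> x \notin pendant e v.
Proof. by apply: contraTN => /pendant_majorF ->. Qed.

Lemma pendant_neq a v : major e v -> a \in pendant e v -> a != v.
Proof. by move=> mv; apply: contraTneq => ->; apply: major_notin_pendant. Qed.

Lemma leaf_adjE a v y : leaf e a -> e v a -> e a y = (y == v).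
Proof.
rewrite /leaf /deg => /cards1P[u Nu] eva.
have : v \in [set w | e a w] by rewrite inE e_sym.
by rewrite Nu inE => /eqP ->; rewrite -in_set1 -Nu inE.
Qed.

Lemma leaf_adj_uniq a v w : leaf e a -> e v a -> e w a -> v = w.
Proof. by move=> la eva ewa; apply/esym/eqP; rewrite -(leaf_adjE w la eva) e_sym. Qed.

Lemma pendant_uniq a v w : a \in pendant e v -> a \in pendant e w -> v = w.
Proof. by case/pendantP=> la eva /pendantP[_ ewa]; apply: leaf_adj_uniq la eva ewa. Qed.

Lemma leaf_pendant a : leaf e a -> exists v, a \in pendant e v.
Proof.
move=> la; have /cards1P[v Na] : #|[set w | e a w]| == 1 := la.
have : v \in [set w | e a w] by rewrite Na set11.
by rewrite inE e_sym => eva; exists v; apply/pendantP.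
Qed.

Lemma reach_leafS a v n : leaf e a -> e v a -> reach e n.+1 a = a |: reach e n v.
Proof.
move=> la eva; elim: n => [|n IH].
  by apply/setP => y; rewrite reach1E !inE (leaf_adjE y la eva).
have reachS m x : reach e m.+1 x = reach e m x :|: [set y | [exists z in reach e m x, e z y]].
  by [].
rewrite reachS IH reachS.
apply/setP => y; rewrite !inE -orbA; case: (y =P a) => //= _.
case y_n: (y \in reach e n v) => //=.
apply/existsP/existsP => [[z /andP[]]|[z /andP[z_n ezy]]]; last first.
  by exists z; rewrite !inE z_n orbT.
rewrite !inE => /orP[/eqP ->|z_n] ezy; last by exists z; rewrite z_n.
by move: ezy; rewrite (leaf_adjE y la eva) => /eqP yv; rewrite yv reach_self in y_n.
Qed.

Lemma dist_twins a b v z : a \in pendant e v -> b \in pendant e v ->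
  z != a -> z != b -> dist e a z = dist e b z.
Proof.
case/pendantP=> la eva /pendantP[lb evb] za zb; apply: eq_find => -[|n].
  by rewrite /= !inE (negbTE za) (negbTE zb).
by rewrite (reach_leafS n la eva) (reach_leafS n lb evb) !inE (negbTE za) (negbTE zb).
Qed.

End Pendants.

Section PendantCount.
Variables (T : finType) (e : rel T).
Implicit Types (A : {set T}) (v x : T).

Lemma pcount_setD1 A v x : pcount e A v = (x \in pendant e v :&: A) + pcount e (A :\ x) v.
Proof. by rewrite setIDA -cardsD1. Qed.

Lemma pcount_setD1_le A v x : pcount e A v <= (pcount e (A :\ x) v).+1.
Proof. by rewrite (pcount_setD1 A v x); case: (_ \in _). Qed.

Lemma pcount_setD1_id A v x : x \notin pendant e v -> pcount e (A :\ x) v = pcount e A v.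
Proof. by move=> xv; rewrite (pcount_setD1 A v x) inE (negbTE xv). Qed.

Lemma pcount_setD1_in A v x : x \in pendant e v -> x \in A ->
  pcount e A v = (pcount e (A :\ x) v).+1.
Proof. by move=> xv xA; rewrite (pcount_setD1 A v x) in_setI xv xA. Qed.

Lemma pcount_setU1 A v y : y \in pendant e v -> y \notin A ->
  pcount e (y |: A) v = (pcount e A v).+1.
Proof.
move=> yv yA; rewrite (pcount_setD1 (y |: A) v y) in_setI setU11 yv add1n.
congr _.+1; apply: eq_card => z; rewrite !inE.
by case: (z =P y) => // ->; rewrite (negbTE yA) andbF.
Qed.

Lemma pcount_setU1_le A v y : pcount e A v <= pcount e (y |: A) v.
Proof. by apply/subset_leq_card/setIS/subsetUr. Qed.

End PendantCount.

(** * Strategies from invariants *)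

Section Strategies.
Variables (T : finType) (e : rel T) (k : nat).
Implicit Types (M B : {set T}) (v : T).

Lemma free_setU1l v M B : free (v |: M) B = free M B :\ v.
Proof. by apply/setP => y; rewrite !inE; case: (y == v). Qed.

Lemma free_setU1r v M B : free M (v |: B) = free M B :\ v.
Proof. by apply/setP => y; rewrite !inE; case: (y == v); rewrite ?orbT. Qed.

Lemma card_free_setD1 v M B : v \in free M B -> #|free M B :\ v| < #|free M B|.
Proof. by move=> v_free; rewrite [X in _ < X](cardsD1 v) v_free. Qed.

Lemma free_notin v M B : v \in free M B -> (v \notin M) && (v \notin B).
Proof. by rewrite !inE negb_or. Qed.

Lemma disjoint_setU1l v M B : [disjoint M & B] -> v \in free M B -> [disjoint v |: M & B].
Proof.
move=> MB /free_notin /andP[_ vB].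
by rewrite disjoints_subset subUset sub1set inE vB -disjoints_subset MB.
Qed.

Lemma disjoint_setU1r v M B : [disjoint M & B] -> v \in free M B -> [disjoint M & v |: B].
Proof.
move=> MB /free_notin /andP[vM _].
by rewrite disjoint_sym disjoints_subset subUset sub1set inE vM -disjoints_subset disjoint_sym.
Qed.

Lemma maker_wins_of_inv (Inv : {set T} -> {set T} -> bool -> Prop) :
  (forall M B t, [disjoint M & B] -> Inv M B t -> free M B = set0 -> resolving_k e k M) ->
  (forall M B, [disjoint M & B] -> Inv M B true -> free M B != set0 ->
     exists2 v, v \in free M B & Inv (v |: M) B false) ->
  (forall M B v, [disjoint M & B] -> Inv M B false -> v \in free M B -> Inv M (v |: B) true) ->
  forall n M B t, [disjoint M & B] -> Inv M B t -> #|free M B| <= n ->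
  maker_wins e k n M B t.
Proof.
move=> inv_end inv_maker inv_breaker; elim=> [|n IH] M B t MB inv le_n /=.
  by apply: (inv_end M B t MB inv); apply/eqP; rewrite -cards_eq0 -leqn0.
case: eqP => [no_free|/eqP some_free]; first exact: (inv_end M B t MB inv).
case: t inv => inv.
  have [v v_free inv'] := inv_maker M B MB inv some_free.
  apply/existsP; exists v; rewrite v_free; apply: IH inv' _.
    exact: disjoint_setU1l.
  by rewrite free_setU1l -ltnS (leq_trans (card_free_setD1 v_free)).
apply/forallP => v; apply/implyP => v_free; apply: IH (inv_breaker M B v MB inv v_free) _.
  exact: disjoint_setU1r.
by rewrite free_setU1r -ltnS (leq_trans (card_free_setD1 v_free)).
Qed.

Lemma breaker_wins_of_inv (Inv : {set T} -> {set T} -> bool -> Prop) :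
  (forall M B t, [disjoint M & B] -> Inv M B t -> free M B = set0 -> ~~ resolving_k e k M) ->
  (forall M B v, [disjoint M & B] -> Inv M B true -> v \in free M B -> Inv (v |: M) B false) ->
  (forall M B, [disjoint M & B] -> Inv M B false -> free M B != set0 ->
     exists2 v, v \in free M B & Inv M (v |: B) true) ->
  forall n M B t, [disjoint M & B] -> Inv M B t -> #|free M B| <= n ->
  ~~ maker_wins e k n M B t.
Proof.
move=> inv_end inv_maker inv_breaker; elim=> [|n IH] M B t MB inv le_n /=.
  by apply: (inv_end M B t MB inv); apply/eqP; rewrite -cards_eq0 -leqn0.
case: eqP => [no_free|/eqP some_free]; first exact: (inv_end M B t MB inv).
case: t inv => inv.
  rewrite negb_exists; apply/forallP => v; rewrite negb_and.
  case v_free: (v \in free M B) => //=.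
  apply: IH (inv_maker M B v MB inv v_free) _; first exact: disjoint_setU1l.
  by rewrite free_setU1l -ltnS (leq_trans (card_free_setD1 v_free)).
have [v v_free inv'] := inv_breaker M B MB inv some_free.
rewrite negb_forall; apply/existsP; exists v; rewrite v_free; apply: IH inv' _.
  exact: disjoint_setU1r.
by rewrite free_setU1r -ltnS (leq_trans (card_free_setD1 v_free)).
Qed.

Lemma free_set0 : free (set0 : {set T}) set0 = setT.
Proof. by rewrite setU0 setC0. Qed.

Lemma claimed_of_free0 M B x : free M B = set0 -> (x \in M) || (x \in B).
Proof. by move=> no_free; have := in_setT x; rewrite -setC0 -no_free !inE negbK. Qed.

End Strategies.

Section Outcome.
Variables (T : finType) (e : rel T) (k : nat).

Lemma O_Rk_B : ~~ maker_wins_first e k -> ~~ maker_wins_second e k -> O_Rk e k = OutB.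
Proof. by rewrite /O_Rk => /negbTE -> /negbTE ->. Qed.

Lemma O_Rk_N : maker_wins_first e k -> ~~ maker_wins_second e k -> O_Rk e k = OutN.
Proof. by rewrite /O_Rk => -> /negbTE ->. Qed.

Lemma O_Rk_M : maker_wins_first e k -> maker_wins_second e k -> O_Rk e k = OutM.
Proof. by rewrite /O_Rk => -> ->. Qed.

End Outcome.

Section Pairing.
Variables (T : finType) (e : rel T) (k : nat) (f : T -> T) (M0 : {set T}).
Hypothesis f_inv : involutive f.
Hypothesis resolving_of_pairs : forall S : {set T}, M0 \subset S ->
  (forall x, f x != x -> (x \in S) || (f x \in S)) -> resolving_k e k S.
Implicit Types (M B : {set T}) (v x : T).

Definition answered M B := forall x, f x != x -> x \in B -> f x \in M.

(* With Maker to move, at most one Breaker vertex [x0] still awaits its answer,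
   and that answer is still available. *)
Definition pairing_inv M B (maker_turn : bool) := M0 \subset M /\
  if maker_turn then exists x0, answered M (B :\ x0) /\ (f x0 != x0 -> f x0 \notin B)
  else answered M B.

Lemma answered_setU1l v M B : answered M B -> answered (v |: M) B.
Proof. by move=> ans x fx xB; rewrite inE ans ?orbT. Qed.

Lemma answered_pending x0 M B : answered M (B :\ x0) -> (f x0 != x0 -> f x0 \in M) ->
  answered M B.
Proof.
move=> ans ans0 x fx xB; case: (x =P x0) => [x_x0|/eqP xx0].
  by rewrite x_x0 in fx *; apply: ans0.
by apply: ans fx _; rewrite !inE xx0.
Qed.

Lemma pairing_inv_end M B t : pairing_inv M B t -> free M B = set0 -> resolving_k e k M.
Proof.
case=> M0M inv no_free; apply: resolving_of_pairs M0M _ => x fx.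
have ans : answered M B.
  case: t inv => [[x0 [ans f_x0]]|//]; apply: answered_pending ans _ => fx0.
  by have := claimed_of_free0 (f x0) no_free; rewrite (negbTE (f_x0 fx0)) orbF.
by case/orP: (claimed_of_free0 x no_free) => [-> //|/(ans x fx) ->]; rewrite orbT.
Qed.

Lemma pairing_inv_maker M B : pairing_inv M B true -> free M B != set0 ->
  exists2 v, v \in free M B & pairing_inv (v |: M) B false.
Proof.
case=> M0M [x0 [ans f_x0]] some_free.
have M0vM v : M0 \subset v |: M by apply: subset_trans M0M (subsetUr _ _).
case answer: ((f x0 != x0) && (f x0 \notin M)).
  case/andP: answer => fx0 fx0M; exists (f x0); first by rewrite !inE negb_or fx0M f_x0.
  split; first exact: M0vM.
  by apply: answered_pending (answered_setU1l _ ans) _ => _; rewrite setU11.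
case/set0Pn: some_free => v v_free; exists v => //; split; first exact: M0vM.
apply/answered_setU1l/(answered_pending ans) => fx0.
by move: answer; rewrite fx0 /= => /negbFE.
Qed.

Lemma pairing_inv_breaker M B v : pairing_inv M B false -> v \in free M B ->
  pairing_inv M (v |: B) true.
Proof.
case=> M0M ans /free_notin /andP[vM vB]; split=> //; exists v; split.
  by move=> x fx /setD1P[xv]; rewrite in_setU1 (negbTE xv); apply: ans.
move=> fv; rewrite in_setU1 negb_or fv /=; apply/negP => fvB.
by have := ans (f v); rewrite f_inv (negbTE vM) eq_sym => /(_ fv fvB).
Qed.

Lemma pairing_inv_wins n M B t : [disjoint M & B] -> pairing_inv M B t ->
  #|free M B| <= n -> maker_wins e k n M B t.
Proof.
apply: maker_wins_of_inv => [M' B' t' _|M' B' _|M' B' v _]; first exact: pairing_inv_end.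
  exact: pairing_inv_maker.
exact: pairing_inv_breaker.
Qed.

Lemma pairing_wins_second : M0 = set0 -> maker_wins_second e k.
Proof.
move=> M0_0; apply: pairing_inv_wins; rewrite ?free_set0 ?cardsT //.
  by rewrite disjoints_subset setC0 subsetT.
by split; [rewrite M0_0 | move=> x _; rewrite inE].
Qed.

Lemma pairing_wins_first x0 : M0 \subset [set x0] -> maker_wins_first e k.
Proof.
move=> M0x0; rewrite /maker_wins_first.
have /ltn_predK <- : 0 < #|T| by apply/card_gt0P; exists x0.
rewrite /= free_set0 (introF eqP) => [|T0]; last by have := in_setT x0; rewrite T0 inE.
apply/existsP; exists x0; rewrite in_setT /=; apply: pairing_inv_wins.
- by rewrite disjoints_subset setC0 subsetT.
- by split; [rewrite setU0 | move=> x _; rewrite inE].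
- by rewrite free_setU1l free_set0 -cardsT (cardsD1 x0 setT) in_setT.
Qed.

End Pairing.


(** * A criterion for distance-k resolving sets *)

Section ResolvingCriterion.
Variables (T : finType) (e : rel T) (k : nat).
Hypothesis e_sym : symmetric e.
Hypothesis leaf_or_major : forall x, leaf e x || major e x.
Hypothesis major_of_pendant : forall a v, a \in pendant e v -> major e v.
Hypothesis card_T : 2 < #|T|.
Hypothesis k_gt0 : 0 < k.
Variable S : {set T}.

Definition separated x y := exists2 z, z \in S & dist_k e k x z != dist_k e k y z.

Lemma separated_sym x y : separated x y -> separated y x.
Proof. by case=> z zS neq; exists z; rewrite // eq_sym. Qed.

Lemma separated_of_reach m x y z : m <= k -> m < #|T| -> z \in S ->
  z \in reach e m x -> z \notin reach e m y -> separated x y.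
Proof.
move=> m_k m_T zS; rewrite -!dist_leE // => xz yz; exists z => //.
by rewrite /dist_k; apply/eqP; move: xz yz; lia.
Qed.

Lemma separated_self x y : x \in S -> x != y -> separated x y.
Proof.
move=> xS xy; apply: (@separated_of_reach 0 x y x); rewrite /= ?inE //.
exact: leq_trans card_T.
Qed.

Lemma separated_by_pendant x y a : a \in pendant e x -> a \in S -> y \notin S -> x != y ->
  separated x y.
Proof.
move=> /pendantP[la exa] aS yS xy; apply: (@separated_of_reach 1 x y a) => //; try lia.
  by rewrite reach1E !inE exa orbT.
rewrite reach1E !inE negb_or; apply/andP; split.
  by apply: contraNneq yS => <-.
by apply: contra xy => eya; rewrite (leaf_adj_uniq e_sym la exa eya).
Qed.

Lemma separated_leaves x y v w : x \in pendant e v -> y \in pendant e w -> v != w ->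
  v \in S -> separated x y.
Proof.
move=> xv yw vw vS; have /pendantP[_ evx] := xv; have /pendantP[ly ewy] := yw.
apply: (@separated_of_reach 1 x y v) => //; try lia.
  by rewrite reach1E !inE e_sym evx orbT.
rewrite reach1E !inE negb_or; apply/andP; split.
  by apply: contraTneq (major_of_pendant xv) => ->; rewrite /major (eqP ly).
by apply: contra vw; rewrite e_sym => evy; rewrite (leaf_adj_uniq e_sym ly evy ewy).
Qed.

(* [a] is at distance 2 from [x] but at least 3 from [y]. *)
Lemma separated_leaves_far x y v w a : 2 <= k -> x \in pendant e v -> y \in pendant e w ->
  v != w -> a \in pendant e v -> a \in S -> y \notin S -> separated x y.
Proof.
move=> k2 xv yw vw av aS yS.
have /pendantP[lx evx] := xv; have /pendantP[ly ewy] := yw; have /pendantP[la eva] := av.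
apply: (@separated_of_reach 2 x y a) => //.
  by rewrite (reach_leafS e_sym 1 lx evx) reach1E !inE eva !orbT.
rewrite (reach_leafS e_sym 1 ly ewy) reach1E !inE !negb_or; apply/and3P; split.
- by apply: contraNneq yS => <-.
- by apply: contraTneq (major_of_pendant yw) => <-; rewrite /major (eqP la).
- by apply: contra vw => ewa; rewrite (leaf_adj_uniq e_sym la eva ewa).
Qed.

Lemma resolving_criterion :
  (forall v, major e v -> v \in S \/ exists2 a, a \in pendant e v & a \in S) ->
  (forall v a b, a \in pendant e v -> b \in pendant e v -> a \notin S -> b \notin S -> a = b) ->
  (2 <= k \/ forall v w a b, a \in pendant e v -> b \in pendant e w ->
     a \notin S -> b \notin S -> v \notin S -> w \notin S -> v = w) ->
  resolving_k e k S.
Proof.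
move=> covered twins far.
have major_sep x y : major e x -> x != y -> x \notin S -> y \notin S -> separated x y.
  move=> mx xy xS yS; case: (covered x mx) => [xS'|[a ax aS]]; first by rewrite xS' in xS.
  exact: separated_by_pendant ax aS yS xy.
suff sep x y : x != y -> separated x y.
  apply/forallP => x; apply/forallP => y; apply/implyP => /sep[z zS neq].
  by apply/existsP; exists z; rewrite zS.
move=> xy; case xS: (x \in S); first exact: separated_self.
case yS: (y \in S); first by apply/separated_sym/separated_self; rewrite // eq_sym.
case/orP: (leaf_or_major x) => [lx|mx]; last by apply: major_sep; rewrite ?xS ?yS.
case/orP: (leaf_or_major y) => [ly|my]; last first.
  by apply/separated_sym/major_sep; rewrite 1?eq_sym ?xS ?yS.
have [[v xv] [w yw]] := (leaf_pendant e_sym lx, leaf_pendant e_sym ly).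
have [vw|/eqP vw] := v =P w.
  by rewrite vw in xv; rewrite (twins w x y) ?xS ?yS ?eqxx in xy.
case vS: (v \in S); first exact: separated_leaves xv yw vw vS.
case wS: (w \in S); first by apply/separated_sym/(separated_leaves yw xv); rewrite 1?eq_sym.
case: far => [k2|near]; last by rewrite (near v w x y) ?xS ?yS ?vS ?wS ?eqxx in vw.
case: (covered v (major_of_pendant xv)) => [|[a av aS]]; first by rewrite vS.
by apply: separated_leaves_far k2 xv yw vw av aS _; rewrite yS.
Qed.

End ResolvingCriterion.


(** * Breaker's threats *)

Section BreakerGoals.
Variables (T : finType) (e : rel T) (k : nat).
Hypothesis e_sym : symmetric e.
Implicit Types (M B : {set T}) (v : T).

Definition twins_claimed B := exists v, 1 < pcount e B v.

Definition stars_claimed B := k = 1 /\ exists v1 v2,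
  [/\ v1 != v2, v1 \in B, v2 \in B, 0 < pcount e B v1 & 0 < pcount e B v2].

Lemma twins_claimed_setU1 B y : twins_claimed B -> twins_claimed (y |: B).
Proof. by case=> v lt1; exists v; apply: leq_trans lt1 (pcount_setU1_le _ _ _ _). Qed.

Lemma stars_claimed_setU1 B y : stars_claimed B -> stars_claimed (y |: B).
Proof.
case=> k1 [v1 [v2 [v12 v1B v2B p1 p2]]]; split=> //; exists v1, v2.
by split; rewrite ?setU1r // (leq_trans _ (pcount_setU1_le _ _ _ _)).
Qed.

Lemma not_resolving_twins M B : [disjoint M & B] -> twins_claimed B -> ~~ resolving_k e k M.
Proof.
move=> MB [v /card_gt1P[a [b [/setIP[av aB] /setIP[bv bB] ab]]]].
apply/forallP => /(_ a) /forallP /(_ b); rewrite ab /= => /existsP[z /andP[zM]].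
have zB := disjointFr MB zM.
have za : z != a by apply: contraFneq zB => ->.
have zb : z != b by apply: contraFneq zB => ->.
by rewrite /dist_k (dist_twins e_sym av bv za zb) eqxx.
Qed.

Hypothesis card_T : 2 < #|T|.

Lemma dist_k1_far a v z : a \in pendant e v -> z != a -> z != v -> dist_k e 1 a z = 2.
Proof.
move=> /pendantP[la eva] za zv; rewrite /dist_k; apply/minn_idPr.
rewrite ltnNge dist_leE; last exact: ltnW.
by rewrite reach1E !inE negb_or za (leaf_adjE e_sym z la eva).
Qed.

Lemma not_resolving_stars M B : [disjoint M & B] -> stars_claimed B -> ~~ resolving_k e k M.
Proof.
move=> MB [-> [v1 [v2 [v12 v1B v2B]]]].
move=> /card_gt0P[a1 /setIP[a1v1 a1B]] /card_gt0P[a2 /setIP[a2v2 a2B]].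
have a12 : a1 != a2.
  by apply: contra v12 => /eqP a12; rewrite a12 in a1v1; rewrite (pendant_uniq e_sym a1v1 a2v2).
apply/forallP => /(_ a1) /forallP /(_ a2); rewrite a12 /= => /existsP[z /andP[zM]].
have notB w : w \in B -> z != w.
  by move=> wB; apply: contraTneq wB => <-; rewrite (disjointFr MB zM).
by rewrite (dist_k1_far a1v1) ?notB // (dist_k1_far a2v2) ?notB.
Qed.

End BreakerGoals.

Lemma uniq3P (T : eqType) (u1 u2 u3 : T) : uniq [:: u1; u2; u3] ->
  [/\ u1 != u2, u1 != u3 & u2 != u3].
Proof. by rewrite /= !inE !negb_or => /and3P[/andP[-> ->] -> _]. Qed.

Section BreakerThreats.
Variables (T : finType) (e : rel T) (k : nat).
Hypothesis e_sym : symmetric e.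
Implicit Types (fr M B : {set T}) (v w x y : T).

Definition cluster v := v |: pendant e v.

Definition fork fr v := [&& major e v, v \in fr & 1 < pcount e fr v].

Lemma cluster_disjoint x v w : major e v -> major e w -> v != w ->
  x \in cluster v -> x \notin cluster w.
Proof.
move=> mv mw vw; rewrite !in_setU1 => /orP[/eqP ->|xv]; rewrite negb_or.
  by rewrite vw (major_notin_pendant _ mv).
apply/andP; split; last by apply: contra vw => xw; rewrite (pendant_uniq e_sym xv xw).
by apply: contraTneq xv => ->; apply: major_notin_pendant.
Qed.

Lemma fork_setD1 fr v x : fork fr v -> x \notin cluster v -> fork (fr :\ x) v.
Proof.
case/and3P=> mv vfr two; rewrite in_setU1 negb_or eq_sym => /andP[xv xpv].
by rewrite /fork mv in_setD1 xv vfr pcount_setD1_id.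
Qed.

Lemma fork_setD1_other fr v w x : major e v -> fork fr w -> v != w -> x \in cluster v ->
  fork (fr :\ x) w.
Proof.
move=> mv fw vw xv; have /and3P[mw _ _] := fw.
exact: fork_setD1 fw (cluster_disjoint mv mw vw xv).
Qed.

Lemma fork_major fr v : fork fr v -> major e v.
Proof. by case/and3P. Qed.

Lemma forks_off_cluster fr x v1 v2 v3 : uniq [:: v1; v2; v3] -> major e v1 ->
  x \in cluster v1 -> fork fr v2 -> fork fr v3 -> fork (fr :\ x) v2 /\ fork (fr :\ x) v3.
Proof. by case/uniq3P=> v12 v13 _ m1 xv1 f2 f3; split; apply: fork_setD1_other m1 _ _ xv1. Qed.

Lemma one_of_two_forks fr x v w : v != w -> fork fr v -> fork fr w ->
  exists2 u, u \in [:: v; w] & fork (fr :\ x) u.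
Proof.
move=> vw fv fw; case xv: (x \in cluster v).
  by exists w; rewrite ?inE ?eqxx ?orbT // (fork_setD1_other (fork_major fv) fw vw xv).
by exists v; rewrite ?inE ?eqxx // fork_setD1 ?xv.
Qed.

Lemma three_of_four_forks fr x v1 v2 v3 v4 : uniq [:: v1; v2; v3; v4] ->
  fork fr v1 -> fork fr v2 -> fork fr v3 -> fork fr v4 ->
  exists u1 u2 u3, uniq [:: u1; u2; u3] /\
    [/\ fork (fr :\ x) u1, fork (fr :\ x) u2 & fork (fr :\ x) u3].
Proof.
rewrite /= !inE !negb_or => /and4P[/and3P[v12 v13 v14] /andP[v23 v24] v34 _] f1 f2 f3 f4.
have other v w : fork fr v -> fork fr w -> v != w -> x \in cluster v -> fork (fr :\ x) w.
  by move=> fv; apply: fork_setD1_other (fork_major fv).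
have same v : fork fr v -> x \in cluster v = false -> fork (fr :\ x) v.
  by move=> fv xv; rewrite fork_setD1 ?xv.
case x1: (x \in cluster v1).
  exists v2, v3, v4; rewrite /= !inE !negb_or v23 v24 v34.
  by split=> //; split; apply: other x1.
case x2: (x \in cluster v2).
  exists v1, v3, v4; rewrite /= !inE !negb_or v13 v14 v34.
  by split=> //; split; [exact: same | apply: other x2; rewrite // eq_sym ..].
case x3: (x \in cluster v3).
  exists v1, v2, v4; rewrite /= !inE !negb_or v12 v14 v24.
  by split=> //; split; [exact: same | exact: same | apply: other x3].
exists v1, v2, v3; rewrite /= !inE !negb_or v12 v13 v23.
by split=> //; split; exact: same.
Qed.

Lemma pendant_in_cluster x v : x \in pendant e v -> x \in cluster v.
Proof. by move=> xv; rewrite in_setU1 xv orbT. Qed.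

(* Positions won by Breaker with Maker to move, [fr] being the free vertices. In the
   constructor names a star is a vertex held by Breaker together with one of its
   pendants, and an open star a free major vertex with a pendant held by Breaker. *)
Inductive maker_threat fr B : Prop :=
| MT_twin v of 0 < pcount e B v & 1 < pcount e fr v
| MT_four v of 3 < pcount e fr v
| MT_two_triples v1 v2 of v1 != v2 & 2 < pcount e fr v1 & 2 < pcount e fr v2
| MT_four_forks v1 v2 v3 v4 of k = 1 & uniq [:: v1; v2; v3; v4]
    & fork fr v1 & fork fr v2 & fork fr v3 & fork fr v4
| MT_triple_two_forks v1 v2 v3 of k = 1 & uniq [:: v1; v2; v3]
    & fork fr v1 & 2 < pcount e fr v1 & fork fr v2 & fork fr v3
| MT_open_star_two_forks v1 v2 v3 of k = 1 & uniq [:: v1; v2; v3]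
    & major e v1 & v1 \in fr & 0 < pcount e B v1 & 0 < pcount e fr v1 & fork fr v2 & fork fr v3
| MT_star_two_forks v1 v2 v3 of k = 1 & uniq [:: v1; v2; v3]
    & v1 \in B & 0 < pcount e B v1 & fork fr v2 & fork fr v3
| MT_star_open_star v1 v2 of k = 1 & v1 != v2
    & v1 \in B & 0 < pcount e B v1
    & major e v2 & v2 \in fr & 0 < pcount e B v2 & 0 < pcount e fr v2.

(* Positions won by Breaker when she is to move. *)
Inductive breaker_threat fr B : Prop :=
| BT_twin v of 0 < pcount e B v & 0 < pcount e fr v
| BT_triple v of 2 < pcount e fr v
| BT_three_forks v1 v2 v3 of k = 1 & uniq [:: v1; v2; v3] & fork fr v1 & fork fr v2 & fork fr v3
| BT_open_star_two_forks v1 v2 v3 of k = 1 & uniq [:: v1; v2; v3]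
    & major e v1 & v1 \in fr & 0 < pcount e B v1 & fork fr v2 & fork fr v3
| BT_star_fork v1 v2 of k = 1 & v1 != v2 & v1 \in B & 0 < pcount e B v1 & fork fr v2
| BT_star_open_star v1 v2 of k = 1 & v1 != v2
    & v1 \in B & 0 < pcount e B v1 & v2 \in fr & 0 < pcount e B v2.

#[global] Arguments MT_four {fr B v}.
#[global] Arguments MT_two_triples {fr B v1 v2}.
#[global] Arguments MT_four_forks {fr B v1 v2 v3 v4}.
#[global] Arguments MT_triple_two_forks {fr B v1 v2 v3}.
#[global] Arguments BT_triple {fr B v}.
#[global] Arguments BT_three_forks {fr B v1 v2 v3}.

Lemma mem_setD1_pendant fr x v : major e v -> x \in pendant e v -> v \in fr -> v \in fr :\ x.
Proof. by move=> mv xv vfr; rewrite in_setD1 eq_sym (pendant_neq mv xv). Qed.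

Lemma breaker_threat_of_maker_threat fr B x : x \in fr -> maker_threat fr B ->
  breaker_threat (fr :\ x) B.
Proof.
move=> xfr; case.
- move=> v pB pfr; apply: (@BT_twin _ _ v) => //.
  by have := pcount_setD1_le e fr v x; lia.
- by move=> v pfr; apply: (@BT_triple _ _ v); have := pcount_setD1_le e fr v x; lia.
- move=> v1 v2 v12 p1 p2; case xv1: (x \in pendant e v1).
    apply: (@BT_triple _ _ v2); rewrite pcount_setD1_id //.
    by apply: contra v12 => xv2; rewrite (pendant_uniq e_sym xv1 xv2).
  by apply: (@BT_triple _ _ v1); rewrite pcount_setD1_id ?xv1.
- move=> v1 v2 v3 v4 k1 u f1 f2 f3 f4.
  have [u1 [u2 [u3 [u' [g1 g2 g3]]]]] := three_of_four_forks x u f1 f2 f3 f4.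
  exact: BT_three_forks k1 u' g1 g2 g3.
- move=> v1 v2 v3 k1 u f1 p1 f2 f3; have /and3P[m1 v1fr _] := f1.
  case xv1: (x \in pendant e v1); last first.
    by apply: (@BT_triple _ _ v1); rewrite pcount_setD1_id ?xv1.
  have [f2' f3'] := forks_off_cluster u m1 (pendant_in_cluster xv1) f2 f3.
  apply: (BT_three_forks k1 u) f2' f3'.
  rewrite /fork m1 (mem_setD1_pendant m1 xv1 v1fr) /=.
  by have := pcount_setD1_le e fr v1 x; lia.
- move=> v1 v2 v3 k1 u m1 v1fr pB pfr f2 f3.
  case xv1: (x \in pendant e v1); last first.
    by apply: (@BT_twin _ _ v1); rewrite ?pcount_setD1_id ?xv1.
  have [f2' f3'] := forks_off_cluster u m1 (pendant_in_cluster xv1) f2 f3.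
  exact: BT_open_star_two_forks k1 u m1 (mem_setD1_pendant m1 xv1 v1fr) pB f2' f3'.
- move=> v1 v2 v3 k1 u v1B pB f2 f3; have [v12 v13 v23] := uniq3P u.
  have [w w23 fw] := one_of_two_forks x v23 f2 f3.
  apply: BT_star_fork k1 _ v1B pB fw.
  by move: w23; rewrite !inE => /orP[] /eqP ->.
- move=> v1 v2 k1 v12 v1B p1B m2 v2fr p2B p2fr.
  case xv2: (x \in pendant e v2); last first.
    by apply: (@BT_twin _ _ v2); rewrite ?pcount_setD1_id ?xv2.
  exact: BT_star_open_star k1 v12 v1B p1B (mem_setD1_pendant m2 xv2 v2fr) p2B.
Qed.

Lemma pendant_free fr v : 0 < pcount e fr v -> exists2 y, y \in pendant e v & y \in fr.
Proof. by case/card_gt0P => y /setIP[yv yfr]; exists y. Qed.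

Lemma maker_threat_of_breaker_threat fr B : [disjoint fr & B] -> breaker_threat fr B ->
  exists2 y, y \in fr & [\/ twins_claimed e (y |: B), stars_claimed e k (y |: B)
                          | maker_threat (fr :\ y) (y |: B)].
Proof.
move=> frB; have yB y : y \in fr -> y \notin B by move=> yfr; rewrite (disjointFr frB yfr).
have claim y v : y \in pendant e v -> y \in fr -> pcount e (y |: B) v = (pcount e B v).+1.
  by move=> yv yfr; rewrite pcount_setU1 ?yB.
have grow y v : 0 < pcount e B v -> 0 < pcount e (y |: B) v.
  by move=> pB; apply: leq_trans pB (pcount_setU1_le _ _ _ _).
case.
- move=> v pB /pendant_free[y yv yfr]; exists y => //; apply: Or31.
  by exists v; rewrite claim.
- move=> v p3; have [|y yv yfr] := @pendant_free fr v; first lia.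
  exists y => //; apply/Or33/(@MT_twin _ _ v); first by rewrite claim.
  by move: p3; rewrite (pcount_setD1_in yv yfr); lia.
- move=> v1 v2 v3 k1 u f1 f2 f3; have /and3P[m1 v1fr p1] := f1.
  have [|y yv yfr] := @pendant_free fr v1; first lia.
  have [f2' f3'] := forks_off_cluster u m1 (pendant_in_cluster yv) f2 f3.
  exists y => //; apply/Or33/(MT_open_star_two_forks k1 u m1 _ _ _ f2' f3').
  - exact: mem_setD1_pendant m1 yv v1fr.
  - by rewrite claim.
  - by move: p1; rewrite (pcount_setD1_in yv yfr); lia.
- move=> v1 v2 v3 k1 u m1 v1fr pB f2 f3.
  have [f2' f3'] := forks_off_cluster u m1 (setU11 v1 _) f2 f3.
  by exists v1 => //; apply/Or33/(MT_star_two_forks k1 u (setU11 v1 B) (grow v1 _ pB)).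
- move=> v1 v2 k1 v12 v1B pB f2; have /and3P[m2 v2fr p2] := f2.
  have [|y yv yfr] := @pendant_free fr v2; first lia.
  exists y => //; apply/Or33/(MT_star_open_star k1 v12 (setU1r y v1B) (grow y _ pB) m2).
  - exact: mem_setD1_pendant m2 yv v2fr.
  - by rewrite claim.
  - by move: p2; rewrite (pcount_setD1_in yv yfr); lia.
- move=> v1 v2 k1 v12 v1B p1B v2fr p2B; exists v2 => //; apply: Or32; split=> //.
  by exists v1, v2; split; rewrite ?setU11 ?setU1r ?grow.
Qed.

Lemma maker_threat_free0 B : ~ maker_threat set0 B.
Proof.
have p0 v : pcount e set0 v = 0 by rewrite setI0 cards0.
have f0 v : fork set0 v = false by rewrite /fork inE andbF.
by case=> [v _|v|v1 v2 _|v1 v2 v3 v4 _ _|v1 v2 v3 _ _|v1 v2 v3 _ _ _|v1 v2 v3 _ _ _ _ _|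
  v1 v2 _ _ _ _ _]; rewrite ?p0 ?f0 ?inE.
Qed.

Lemma breaker_threat_free0 B : ~ breaker_threat set0 B.
Proof.
have p0 v : pcount e set0 v = 0 by rewrite setI0 cards0.
have f0 v : fork set0 v = false by rewrite /fork inE andbF.
by case=> [v _|v|v1 v2 v3 _ _|v1 v2 v3 _ _ _|v1 v2 _ _ _ _|v1 v2 _ _ _ _]; rewrite ?p0 ?f0 ?inE.
Qed.

Definition breaker_inv M B (maker_turn : bool) :=
  [\/ twins_claimed e B, stars_claimed e k B |
      if maker_turn then maker_threat (free M B) B else breaker_threat (free M B) B].

Hypothesis card_T : 2 < #|T|.

Lemma breaker_inv_wins n M B t : [disjoint M & B] -> breaker_inv M B t ->
  #|free M B| <= n -> ~~ maker_wins e k n M B t.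
Proof.
apply: breaker_wins_of_inv => [M' B' t' MB|M' B' v _|M' B' MB].
- case=> [tw|st|th] fr0; first exact: (not_resolving_twins k e_sym MB tw).
    exact: (not_resolving_stars e_sym card_T MB st).
  by case: t' th; rewrite fr0; [move/maker_threat_free0|move/breaker_threat_free0].
- by case=> [tw|st|th] v_free; [apply: Or31|apply: Or32|apply/Or33];
    rewrite // free_setU1l; apply: breaker_threat_of_maker_threat.
- case=> [tw|st|th] some_free.
  + by case/set0Pn: some_free => y y_free; exists y => //; apply/Or31/twins_claimed_setU1.
  + by case/set0Pn: some_free => y y_free; exists y => //; apply/Or32/stars_claimed_setU1.
  have frB : [disjoint free M' B' & B'] by rewrite disjoints_subset setCS subsetUr.
  have [y y_free [tw|st|th']] := maker_threat_of_breaker_threat frB th; exists y => //.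
  + exact: Or31.
  + exact: Or32.
  + by apply: Or33; rewrite free_setU1r.
Qed.

Lemma not_maker_wins_first : maker_threat setT set0 -> ~~ maker_wins_first e k.
Proof.
move=> th; apply: breaker_inv_wins; rewrite ?free_set0 ?cardsT //.
  by rewrite disjoints_subset setC0 subsetT.
by apply: Or33; rewrite free_set0.
Qed.

Lemma not_maker_wins_second : breaker_threat setT set0 -> ~~ maker_wins_second e k.
Proof.
move=> th; apply: breaker_inv_wins; rewrite ?free_set0 ?cardsT //.
  by rewrite disjoints_subset setC0 subsetT.
by apply: Or33; rewrite free_set0.
Qed.

Lemma O_Rk_B_of_threats : maker_threat setT set0 -> breaker_threat setT set0 -> O_Rk e k = OutB.
Proof.
by move=> mth bth; apply: O_Rk_B; [apply: not_maker_wins_first | apply: not_maker_wins_second].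
Qed.

End BreakerThreats.

(** * Maker's pairing *)

Section PendantPairing.
Variables (T : finType) (e : rel T).
Hypothesis e_sym : symmetric e.
Hypothesis leaf_or_major : forall x, leaf e x || major e x.
Hypothesis major_of_pendant : forall a v, a \in pendant e v -> major e v.
Hypothesis pendant_gt0 : forall v, major e v -> 0 < #|pendant e v|.
Definition swappable u1 u2 :=
  u1 = u2 \/ [/\ major e u1, major e u2, #|pendant e u1| != 1 & #|pendant e u2| != 1].

Lemma swappable_refl u : swappable u u.
Proof. by left. Qed.

Lemma swappable_many u1 u2 : major e u1 -> major e u2 ->
  1 < #|pendant e u1| -> 1 < #|pendant e u2| -> swappable u1 u2.
Proof. by move=> m1 m2 p1 p2; right; split=> //; apply/eqP; lia. Qed.

Variables u1 u2 : T.
Hypothesis swap_majors : swappable u1 u2.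

Definition pendant_nth v i := nth v (enum (pendant e v)) i.

Definition parent a := odflt a [pick p | e p a].

(* A vertex with one pendant is paired with it; otherwise its first two pendants
   are paired with each other, and the vertex itself with its image under the
   transposition of [u1] and [u2]. *)
Definition partner x :=
  if major e x then
    if #|pendant e x| == 1 then pendant_nth x 0 else tperm u1 u2 x
  else
    let p := parent x in
    if #|pendant e p| == 1 then p
    else if x == pendant_nth p 0 then pendant_nth p 1
    else if x == pendant_nth p 1 then pendant_nth p 0
    else x.

Lemma pendant_nth_in v i : i < #|pendant e v| -> pendant_nth v i \in pendant e v.
Proof. by move=> lt_i; rewrite -mem_enum mem_nth // -cardE. Qed.

Lemma pendant_nth_inj v i j : i < #|pendant e v| -> j < #|pendant e v| ->
  (pendant_nth v i == pendant_nth v j) = (i == j).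
Proof. by move=> lt_i lt_j; rewrite nth_uniq ?enum_uniq // -cardE. Qed.

Lemma pendant_nthP v a : a \in pendant e v -> exists2 i, i < #|pendant e v| & a = pendant_nth v i.
Proof.
move=> av; exists (index a (enum (pendant e v))); last by rewrite /pendant_nth nth_index ?mem_enum.
by rewrite cardE index_mem mem_enum.
Qed.

Lemma pendant_nth0 v a : #|pendant e v| = 1 -> a \in pendant e v -> a = pendant_nth v 0.
Proof. by move=> one /pendant_nthP[i lt_i ->]; have -> : i = 0 by lia. Qed.

Lemma parent_pendant a v : a \in pendant e v -> parent a = v.
Proof.
case/pendantP=> la eva; rewrite /parent; case: pickP => [p epa|no_parent] /=.
  exact: (leaf_adj_uniq e_sym la epa eva).
by have := no_parent v; rewrite eva.
Qed.

Lemma partner_major1 v : major e v -> #|pendant e v| = 1 -> partner v = pendant_nth v 0.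
Proof. by move=> mv one; rewrite /partner mv one. Qed.

Lemma partner_major v : major e v -> #|pendant e v| != 1 -> partner v = tperm u1 u2 v.
Proof. by move=> mv /negbTE many; rewrite /partner mv many. Qed.

Lemma partner_pendant1 a v : a \in pendant e v -> #|pendant e v| = 1 -> partner a = v.
Proof. by move=> av one; rewrite /partner (pendant_majorF av) (parent_pendant av) one. Qed.

Lemma partner_pendant a v : a \in pendant e v -> 1 < #|pendant e v| ->
  partner a = if a == pendant_nth v 0 then pendant_nth v 1
              else if a == pendant_nth v 1 then pendant_nth v 0 else a.
Proof.
move=> av many; rewrite /partner (pendant_majorF av) (parent_pendant av) /=.
by rewrite (_ : (_ == 1) = false) //; apply/eqP; lia.
Qed.

Lemma partner_pendant01 v : 1 < #|pendant e v| ->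
  partner (pendant_nth v 0) = pendant_nth v 1 /\ partner (pendant_nth v 1) = pendant_nth v 0.
Proof.
move=> many; have [p0 p1] : 0 < #|pendant e v| /\ 1 < #|pendant e v| by lia.
rewrite !(partner_pendant (pendant_nth_in p0)) ?(partner_pendant (pendant_nth_in p1)) //.
by rewrite !eqxx pendant_nth_inj.
Qed.

Lemma swap_majorP x : major e x -> #|pendant e x| != 1 ->
  major e (tperm u1 u2 x) /\ #|pendant e (tperm u1 u2 x)| != 1.
Proof.
move=> mx many; case: tpermP => [xu1|xu2|//]; case: swap_majors => [u12|[]//].
  by rewrite -u12 -xu1.
by rewrite u12 -xu2.
Qed.

Lemma partner_involutive : involutive partner.
Proof.
move=> x; case/orP: (leaf_or_major x) => [lx|mx].
  have [v xv] := leaf_pendant e_sym lx; have mv := major_of_pendant xv.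
  have [one|many] := eqVneq #|pendant e v| 1.
    by rewrite (partner_pendant1 xv one) (partner_major1 mv one) -(pendant_nth0 one xv).
  have {}many : 1 < #|pendant e v| by have := pendant_gt0 mv; lia.
  have [p0 p1] := partner_pendant01 many.
  have [-> //|x0] := eqVneq x (pendant_nth v 0); first by rewrite p0 p1.
  have [-> //|x1] := eqVneq x (pendant_nth v 1); first by rewrite p1 p0.
  have px : partner x = x by rewrite (partner_pendant xv many) (negbTE x0) (negbTE x1).
  by rewrite !px.
have [one|many] := eqVneq #|pendant e x| 1.
  have x0 : pendant_nth x 0 \in pendant e x by apply: pendant_nth_in; rewrite one.
  by rewrite (partner_major1 mx one) (partner_pendant1 x0 one).
have [mx' many'] := swap_majorP mx many.
by rewrite (partner_major mx many) (partner_major mx' many') tpermK.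
Qed.

Definition meets_pairs (S : {set T}) := forall x, partner x != x -> (x \in S) || (partner x \in S).

Variable S : {set T}.
Hypothesis S_pairs : meets_pairs S.

Lemma pendant_nth_neq v i : major e v -> i < #|pendant e v| -> pendant_nth v i != v.
Proof. by move=> mv /pendant_nth_in; apply: pendant_neq. Qed.

Lemma meets_pairs_major v : major e v -> v \in S \/ exists2 a, a \in pendant e v & a \in S.
Proof.
move=> mv; have [one|many] := eqVneq #|pendant e v| 1.
  have p0 : 0 < #|pendant e v| by rewrite one.
  have := @S_pairs v; rewrite (partner_major1 mv one) (pendant_nth_neq mv p0).
  by case/(_ isT)/orP => [|pS]; [left | right; exists (pendant_nth v 0); rewrite ?pendant_nth_in].
have {}many : 1 < #|pendant e v| by have := pendant_gt0 mv; lia.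
right; have [p0 p1] : 0 < #|pendant e v| /\ 1 < #|pendant e v| by lia.
have := @S_pairs (pendant_nth v 0); rewrite (partner_pendant01 many).1 pendant_nth_inj //.
case/(_ isT)/orP => pS; [exists (pendant_nth v 0) | exists (pendant_nth v 1)] => //.
  exact: pendant_nth_in.
exact: pendant_nth_in.
Qed.

Lemma meets_pairs_pendant01 v : 1 < #|pendant e v| ->
  (pendant_nth v 0 \in S) || (pendant_nth v 1 \in S).
Proof.
move=> many; have := @S_pairs (pendant_nth v 0).
by rewrite (partner_pendant01 many).1 pendant_nth_inj //; [apply | lia].
Qed.

Lemma meets_pairs_twins : (forall v, major e v -> #|pendant e v| <= 3) ->
  (forall v, major e v -> #|pendant e v| = 3 -> pendant_nth v 2 \in S) ->
  forall v a b, a \in pendant e v -> b \in pendant e v -> a \notin S -> b \notin S -> a = b.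
Proof.
move=> le3 third v a b av bv aS bS; have mv := major_of_pendant av.
have [i lt_i ai] := pendant_nthP av; have [j lt_j bj] := pendant_nthP bv.
have one_in i' j' : i' < j' < #|pendant e v| ->
    (pendant_nth v i' \in S) || (pendant_nth v j' \in S).
  case/andP=> lt_ij' lt_j'; have le3v := le3 v mv.
  have [j'2|j'2] := eqVneq j' 2; first by rewrite j'2 third ?orbT //; lia.
  have [-> ->] : i' = 0 /\ j' = 1 by lia.
  by apply: meets_pairs_pendant01; lia.
rewrite ai bj; have [lt_ij|lt_ji|-> //] := ltngtP i j.
  by have := one_in i j; rewrite -ai -bj (negbTE aS) (negbTE bS) lt_ij lt_j => /(_ isT).
by have := one_in j i; rewrite -ai -bj (negbTE aS) (negbTE bS) lt_ji lt_i => /(_ isT).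
Qed.

Lemma meets_pairs_many a v : a \in pendant e v -> a \notin S -> v \notin S ->
  1 < #|pendant e v|.
Proof.
move=> av aS vS; have mv := major_of_pendant av; have := pendant_gt0 mv.
have [one _|] := eqVneq #|pendant e v| 1; last lia.
have p0 : 0 < #|pendant e v| by rewrite one.
have := @S_pairs v; rewrite (partner_major1 mv one) (pendant_nth_neq mv p0).
by rewrite -(pendant_nth0 one av) (negbTE aS) (negbTE vS) => /(_ isT).
Qed.

Lemma meets_pairs_swap : u1 != u2 -> (u1 \in S) || (u2 \in S).
Proof.
move=> u12; case: swap_majors => [/eqP|[m1 _ many1 _]]; first by rewrite (negbTE u12).
by have := @S_pairs u1; rewrite (partner_major m1 many1) tpermL eq_sym u12; apply.
Qed.

Lemma resolving_of_meets_pairs k (M0 : {set T}) : 0 < k -> 2 < #|T| ->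
  (forall v, major e v -> #|pendant e v| <= 3) ->
  (forall v, major e v -> #|pendant e v| = 3 -> pendant_nth v 2 \in M0) ->
  (k = 1 -> forall v, major e v -> 1 < #|pendant e v| -> v \in [set u1; u2] :|: M0) ->
  M0 \subset S -> resolving_k e k S.
Proof.
move=> k_gt0 card_T le3 third crowded M0S.
apply: (resolving_criterion e_sym leaf_or_major major_of_pendant card_T k_gt0).
- exact: meets_pairs_major.
- by apply: meets_pairs_twins => // v mv /(third v mv) /(subsetP M0S).
have [k2|k1] := leqP 2 k; [by left | right]; have {}k1 : k = 1 by lia.
move=> v w a b av bw aS bS vS wS.
have outside x y : y \in pendant e x -> y \notin S -> x \notin S -> x \in [set u1; u2].
  move=> yx yS xS; have := crowded k1 x (major_of_pendant yx) (meets_pairs_many yx yS xS).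
  by rewrite inE => /orP[//|/(subsetP M0S)]; rewrite (negbTE xS).
move: (outside v a av aS vS) (outside w b bw bS wS); rewrite !inE.
have [u12|u12] := eqVneq u1 u2; first by rewrite u12 !orbb => /eqP -> /eqP ->.
move=> /orP[]/eqP vu /orP[]/eqP wu; rewrite vu wu // in vS wS *.
  by have := meets_pairs_swap u12; rewrite (negbTE vS) (negbTE wS).
by have := meets_pairs_swap u12; rewrite (negbTE vS) (negbTE wS).
Qed.

End PendantPairing.


(** * Trees without vertices of degree two *)

Section NoDegreeTwo.
Variables (T : finType) (e : rel T).
Hypothesis e_sym : symmetric e.
Hypothesis e_irr : irreflexive e.
Hypothesis e_conn : forall x y, connect e x y.
Hypothesis not_path : ~ is_path_graph e.
Hypothesis no_deg2 : forall v, deg e v != 2.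

Lemma closed_connect (C : pred T) : (forall u z, C u -> e u z -> C z) ->
  forall x y, C x -> C y.
Proof.
move=> closedC x y Cx; case/connectP: (e_conn x y) => p + ->.
by elim: p x Cx => [|z p IH] x Cx //= /andP[exz]; apply: IH (closedC _ _ Cx exz).
Qed.

Lemma deg_gt0 x : 0 < deg e x.
Proof.
rewrite lt0n cards_eq0; apply/negP => /eqP N0.
have only_x y : y = x.
  apply/eqP; apply: (@closed_connect (pred1 x) _ x y (eqxx x)) => u z /eqP -> exz.
  have : z \in (set0 : {set T}) by rewrite -N0 inE.
  by rewrite inE.
apply: not_path; exists [:: x]; split.
  by apply: uniq_perm; rewrite ?enum_uniq // => y; rewrite mem_enum inE (only_x y) eqxx.
by move=> y z; rewrite (only_x y) (only_x z) e_irr.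
Qed.

Lemma leaf_or_major x : leaf e x || major e x.
Proof. by rewrite /leaf /major; have := deg_gt0 x; have := no_deg2 x; lia. Qed.

(* A leaf hanging on a leaf would make the graph a single edge, a path. *)
Lemma major_of_pendant a v : a \in pendant e v -> major e v.
Proof.
case/pendantP => la eva; case/orP: (leaf_or_major v) => // lv; exfalso.
have eav : e a v by rewrite e_sym.
have only_av y : (y == a) || (y == v).
  apply: (@closed_connect (fun y => (y == a) || (y == v)) _ a); last by rewrite eqxx.
  move=> u z /orP[] /eqP ->.
    by rewrite (leaf_adjE e_sym z la eva) => ->; rewrite orbT.
  by rewrite (leaf_adjE e_sym z lv eav) => ->.
have av : a != v by apply: contraTneq eav => ->; rewrite e_irr.
apply: not_path; exists [:: a; v]; split.
  apply: uniq_perm; rewrite ?enum_uniq //= ?inE ?av // => y.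
  by rewrite mem_enum !inE only_av.
move=> x y /=; rewrite !inE !xpair_eqE.
by case/orP: (only_av x) => /eqP ->; case/orP: (only_av y) => /eqP ->;
  rewrite ?eqxx ?e_irr ?eav ?eva ?(negbTE av) ?(eq_sym v a) ?(negbTE av) ?orbT.
Qed.

Lemma ter_pendant v : major e v -> ter e v = #|pendant e v|.
Proof.
move=> mv; have T1 : 1 < #|T| by apply: ltnW (card_gt2_major mv).
have T0 : 0 < #|T| by apply: ltnW.
have near l w : l \in pendant e w -> dist e l w <= 1.
  by case/pendantP=> _ ewl; rewrite dist_leE // reach1E !inE e_sym ewl orbT.
apply: eq_card => l; apply/idP/idP.
  rewrite inE => /and3P[ll _ /forallP closest]; have [p lp] := leaf_pendant e_sym ll.
  have [<- //|pv] := eqVneq p v.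
  have := closest p; rewrite (major_of_pendant lp) pv /= => lt_vp.
  have : dist e l v <= 0 by have := near l p lp; lia.
  by rewrite dist_leE // inE => /eqP vl; rewrite vl leaf_majorF in mv.
move=> lv; have /pendantP[ll evl] := lv; rewrite inE /terminal_of ll mv /=.
apply/forallP => w; apply/implyP => /andP[mw wv].
have : ~~ (dist e l w <= 1).
  rewrite dist_leE // reach1E !inE negb_or (leaf_adjE e_sym w ll evl) wv andbT.
  by apply: contraTneq mw => ->; rewrite leaf_majorF.
by have := near l v lv; lia.
Qed.

Lemma in_Mset i v : 0 < i < 4 -> (v \in Mset e i) = major e v && (#|pendant e v| == i).
Proof.
move=> i_range; rewrite inE /exterior_major; case mv: (major e v) => //=.
rewrite ter_pendant // (_ : (i == 4) = false); last by apply/eqP; lia.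
by case: eqP => [->|]; rewrite ?andbT ?andbF //; lia.
Qed.

Lemma in_Mset4 v : (v \in Mset e 4) = major e v && (3 < #|pendant e v|).
Proof.
rewrite inE /exterior_major; case mv: (major e v) => //=.
by rewrite ter_pendant //; apply/andP/idP => [[]|]; lia.
Qed.

Variable k : nat.
Hypothesis ter_gt0 : forall v, major e v -> 0 < ter e v.
Hypothesis k_gt0 : 0 < k.

Lemma pendant_gt0 v : major e v -> 0 < #|pendant e v|.
Proof. by move=> mv; rewrite -(ter_pendant mv) ter_gt0. Qed.

Lemma fork_setT v : fork e setT v = major e v && (1 < #|pendant e v|).
Proof. by rewrite /fork in_setT setIT. Qed.

Lemma Mset2_pendant v : v \in Mset e 2 -> major e v /\ #|pendant e v| = 2.
Proof. by rewrite in_Mset // => /andP[-> /eqP]. Qed.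

Lemma Mset3_pendant v : v \in Mset e 3 -> major e v /\ #|pendant e v| = 3.
Proof. by rewrite in_Mset // => /andP[-> /eqP]. Qed.

Lemma pendant_le3 : Mset e 4 = set0 -> forall v, major e v -> #|pendant e v| <= 3.
Proof.
move=> M4_0 v mv; have := in_Mset4 v.
by rewrite M4_0 inE mv /=; lia.
Qed.

Lemma pendant_le2 : Mset e 4 = set0 -> Mset e 3 = set0 ->
  forall v, major e v -> #|pendant e v| <= 2.
Proof.
move=> M4_0 M3_0 v mv; have := @in_Mset 3 v isT; rewrite M3_0 inE mv /= => /esym/eqP.
by have := pendant_le3 M4_0 mv; lia.
Qed.

Lemma Mset23_cover v : Mset e 4 = set0 -> major e v -> 1 < #|pendant e v| ->
  (v \in Mset e 2) || (v \in Mset e 3).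
Proof.
move=> M4_0 mv many; rewrite !in_Mset // mv /=.
by have := pendant_le3 M4_0 mv; lia.
Qed.

Lemma maker_wins_first_pairing x0 u1 u2 :
  swappable e u1 u2 -> 2 < #|T| -> (forall v, major e v -> #|pendant e v| <= 3) ->
  (forall v, major e v -> #|pendant e v| = 3 -> pendant_nth e v 2 = x0) ->
  (k = 1 -> forall v, major e v -> 1 < #|pendant e v| -> v \in [set u1; u2; x0]) ->
  maker_wins_first e k.
Proof.
move=> swap card_T le3 third crowded.
have f_inv := partner_involutive e_sym leaf_or_major major_of_pendant pendant_gt0 swap.
apply: (pairing_wins_first f_inv _ (subxx [set x0])) => S x0S S_pairs.
apply: (resolving_of_meets_pairs e_sym leaf_or_major major_of_pendant pendant_gt0 swap S_pairs
  k_gt0 card_T le3 _ _ x0S).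
- by move=> v mv three; rewrite (third v mv three) inE.
- by move=> k1 v mv many; have := crowded k1 v mv many; rewrite !inE -orbA.
Qed.

Lemma maker_wins_second_pairing u1 u2 :
  swappable e u1 u2 -> 2 < #|T| -> (forall v, major e v -> #|pendant e v| <= 2) ->
  (k = 1 -> forall v, major e v -> 1 < #|pendant e v| -> v \in [set u1; u2]) ->
  maker_wins_second e k.
Proof.
move=> swap card_T le2 crowded.
have f_inv := partner_involutive e_sym leaf_or_major major_of_pendant pendant_gt0 swap.
apply: (@pairing_wins_second _ _ _ _ set0 f_inv _ erefl) => S _ S_pairs.
apply: (resolving_of_meets_pairs e_sym leaf_or_major major_of_pendant pendant_gt0 swap S_pairs
  k_gt0 card_T _ _ _ (sub0set S)) => //.
- by move=> v mv; have := le2 v mv; lia.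
- by move=> v mv three; have := le2 v mv; lia.
- by move=> k1 v mv many; rewrite setU0 crowded.
Qed.

Lemma outcome_M4 : 0 < #|Mset e 4| -> O_Rk e k = OutB.
Proof.
case/card_gt0P => v; rewrite in_Mset4 => /andP[mv p4]; have card_T := card_gt2_major mv.
apply: (O_Rk_B_of_threats e_sym card_T).
  by apply: (MT_four _ (v := v)); rewrite setIT.
by apply: (BT_triple _ (v := v)); rewrite setIT; apply: ltnW.
Qed.

Lemma outcome_two_M3 : 1 < #|Mset e 3| -> O_Rk e k = OutB.
Proof.
case/card_gt1P => v1 [v2 [/Mset3_pendant[m1 p1] /Mset3_pendant[_ p2] v12]].
have card_T := card_gt2_major m1.
apply: (O_Rk_B_of_threats e_sym card_T).
  by apply: (MT_two_triples _ v12); rewrite ?setIT ?p1 ?p2.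
by apply: (BT_triple _ (v := v1)); rewrite setIT p1.
Qed.

Lemma outcome_M3_two_M2 : #|Mset e 3| = 1 -> 1 < #|Mset e 2| -> k = 1 -> O_Rk e k = OutB.
Proof.
move=> /eqP/cards1P[w M3w] /card_gt1P[v1 [v2 [/Mset2_pendant[m1 p1] /Mset2_pendant[m2 p2] v12]]] k1.
have /Mset3_pendant[mw pw] : w \in Mset e 3 by rewrite M3w set11.
have card_T := card_gt2_major mw.
have uniq_wv : uniq [:: w; v1; v2].
  by rewrite /= !inE v12 !andbT; apply/norP; split; apply/eqP => wv; move: pw; rewrite wv ?p1 ?p2.
apply: (O_Rk_B_of_threats e_sym card_T).
  by apply: (MT_triple_two_forks k1 uniq_wv); rewrite ?fork_setT ?setIT ?mw ?m1 ?m2 ?pw ?p1 ?p2.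
by apply: (BT_triple _ (v := w)); rewrite setIT pw.
Qed.

Lemma outcome_four_M2 : 3 < #|Mset e 2| -> k = 1 -> O_Rk e k = OutB.
Proof.
move=> /card_geqP[s [uniq_s size_s sub_s]] k1.
case: s uniq_s size_s sub_s => [|v1 [|v2 [|v3 [|v4 [|? ?]]]]] // uniq_v _ sub_v.
have fork_v v : v \in [:: v1; v2; v3; v4] -> fork e setT v.
  by move=> /sub_v /Mset2_pendant[mv pv]; rewrite fork_setT mv pv.
have card_T : 2 < #|T|.
  by have /Mset2_pendant[m1 _] := sub_v v1 (mem_head _ _); apply: card_gt2_major m1.
have uniq3 : uniq [:: v1; v2; v3].
  by move: uniq_v; rewrite /= !inE !negb_or => /and4P[/and3P[-> -> _] /andP[-> _] _ _].
apply: (O_Rk_B_of_threats e_sym card_T).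
  by apply: (MT_four_forks k1 uniq_v); apply: fork_v; rewrite !inE eqxx ?orbT.
by apply: (BT_three_forks k1 uniq3); apply: fork_v; rewrite !inE eqxx ?orbT.
Qed.

Lemma outcome_one_M3 : Mset e 4 = set0 -> #|Mset e 3| = 1 -> #|Mset e 2| <= 1 \/ 1 < k ->
  O_Rk e k = OutN.
Proof.
move=> M4_0 /eqP/cards1P[w M3w] few.
have /Mset3_pendant[mw pw] : w \in Mset e 3 by rewrite M3w set11.
have card_T := card_gt2_major mw.
apply: O_Rk_N; last first.
  apply: (not_maker_wins_second e_sym card_T).
  by apply: (BT_triple _ (v := w)); rewrite setIT pw.
have [u u_ok M2u] : exists2 u, u = w \/ u \in Mset e 2 & k = 1 -> Mset e 2 \subset [set u].
  case: few => [/card_le1P M2_le1|k2]; last by exists w; [left | move=> k1; lia].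
  have [M2_0|[u uM2]] := set_0Vmem (Mset e 2); first by exists w; [left | rewrite M2_0 sub0set].
  by exists u; [right | move=> _; apply/subsetP => x; rewrite (M2_le1 u uM2) inE].
apply: (maker_wins_first_pairing (x0 := pendant_nth e w 2) (u1 := w) (u2 := u)) => //.
- case: u_ok => [<-|/Mset2_pendant[mu pu]]; first exact: swappable_refl.
  by apply: swappable_many; rewrite ?pw ?pu.
- exact: pendant_le3.
- move=> v mv pv; have : v \in Mset e 3 by rewrite in_Mset // mv pv.
  by rewrite M3w => /set1P ->.
- move=> k1 v mv many; rewrite !inE.
  case/orP: (Mset23_cover M4_0 mv many) => [/(subsetP (M2u k1))|]; rewrite ?M3w inE => ->;
  by rewrite ?orbT.
Qed.

Lemma outcome_three_M2 : Mset e 4 = set0 -> Mset e 3 = set0 -> #|Mset e 2| = 3 -> k = 1 ->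
  O_Rk e k = OutN.
Proof.
move=> M4_0 M3_0 M2_3 k1; have [a aM2] : exists a, a \in Mset e 2 by apply/card_gt0P; lia.
have /cards2P[b [c [bc M2a]]] : #|Mset e 2 :\ a| == 2.
  by move: M2_3; rewrite (cardsD1 a) aM2 add1n => -[->].
have /setD1P[ba bM2] : b \in Mset e 2 :\ a by rewrite M2a !inE eqxx.
have /setD1P[ca cM2] : c \in Mset e 2 :\ a by rewrite M2a !inE eqxx orbT.
have [[ma pa] [mb pb]] := (Mset2_pendant aM2, Mset2_pendant bM2).
have [mc pc] := Mset2_pendant cM2.
have card_T := card_gt2_major ma.
have uniq_abc : uniq [:: a; b; c] by rewrite /= !inE negb_or !(eq_sym a) ba ca bc.
apply: O_Rk_N.
  apply: (maker_wins_first_pairing (x0 := a) (u1 := b) (u2 := c)) => //.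
  - by apply: swappable_many; rewrite ?pb ?pc.
  - exact: pendant_le3.
  - by move=> v mv pv; have := pendant_le2 M4_0 M3_0 mv; lia.
  - move=> _ v mv many; have := Mset23_cover M4_0 mv many; rewrite M3_0 in_set0 orbF => vM2.
    have [-> |va] := eqVneq v a; first by rewrite !inE eqxx !orbT.
    have : v \in Mset e 2 :\ a by rewrite in_setD1 va.
    by rewrite M2a !inE => /orP[] /eqP ->; rewrite eqxx ?orbT.
apply: (not_maker_wins_second e_sym card_T).
by apply: (BT_three_forks k1 uniq_abc); rewrite fork_setT ?ma ?mb ?mc ?pa ?pb ?pc.
Qed.

Lemma outcome_two_M2 : Mset e 4 = set0 -> Mset e 3 = set0 -> #|Mset e 2| = 2 -> k = 1 ->
  O_Rk e k = OutM.
Proof.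
move=> M4_0 M3_0 /eqP/cards2P[a [b [ab M2ab]]] k1.
have [[ma pa] [mb pb]] : (major e a /\ #|pendant e a| = 2) /\ (major e b /\ #|pendant e b| = 2).
  by split; apply: Mset2_pendant; rewrite M2ab !inE eqxx ?orbT.
have card_T := card_gt2_major ma.
have swap : swappable e a b by apply: swappable_many; rewrite ?pa ?pb.
have crowded v : major e v -> 1 < #|pendant e v| -> v \in [set a; b].
  by move=> mv many; have := Mset23_cover M4_0 mv many; rewrite M3_0 in_set0 orbF M2ab.
apply: O_Rk_M.
  apply: (maker_wins_first_pairing (x0 := a) swap card_T (pendant_le3 M4_0)).
    by move=> v mv pv; have := pendant_le2 M4_0 M3_0 mv; lia.
  by move=> _ v mv many; have := crowded v mv many; rewrite !inE => /orP[] ->; rewrite ?orbT.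
by apply: (maker_wins_second_pairing swap card_T (pendant_le2 M4_0 M3_0)) => _.
Qed.

Lemma outcome_M2_far : Mset e 4 = set0 -> Mset e 3 = set0 -> Mset e 2 != set0 -> 1 < k ->
  O_Rk e k = OutM.
Proof.
move=> M4_0 M3_0 /set0Pn[a /Mset2_pendant[ma _]] k2.
have card_T := card_gt2_major ma.
have not_k1 : k <> 1 by lia.
apply: O_Rk_M.
  apply: (maker_wins_first_pairing (x0 := a) (swappable_refl e a) card_T (pendant_le3 M4_0)) => //.
  by move=> v mv pv; have := pendant_le2 M4_0 M3_0 mv; lia.
exact: (maker_wins_second_pairing (swappable_refl e a) card_T (pendant_le2 M4_0 M3_0)).
Qed.

End NoDegreeTwo.

Theorem theorem3p9 (T : finType) (e : rel T) (k : nat)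
  (he_sym : symmetric e) (he_irr : irreflexive e)
  (htree : is_tree e) (hnotpath : ~ is_path_graph e)
  (hno2 : forall v : T, deg e v != 2)
  (hter0 : forall v : T, major e v -> 0 < ter e v)
  (hk : 0 < k) :
  ((1 <= #|Mset e 4| \/ 2 <= #|Mset e 3|
    \/ (Mset e 4 = set0 /\ #|Mset e 3| = 1 /\ 2 <= #|Mset e 2| /\ k = 1)
    \/ (Mset e 4 = set0 /\ Mset e 3 = set0 /\ 4 <= #|Mset e 2| /\ k = 1))
     -> O_Rk e k = OutB)
  /\
  (((Mset e 4 = set0 /\ #|Mset e 3| = 1 /\ #|Mset e 2| <= 1 /\ k = 1)
    \/ (Mset e 4 = set0 /\ #|Mset e 3| = 1 /\ 2 <= k)
    \/ (Mset e 4 = set0 /\ Mset e 3 = set0 /\ #|Mset e 2| = 3 /\ k = 1))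
     -> O_Rk e k = OutN)
  /\
  (((Mset e 4 = set0 /\ Mset e 3 = set0 /\ #|Mset e 2| = 2 /\ k = 1)
    \/ (Mset e 4 = set0 /\ Mset e 3 = set0 /\ Mset e 2 != set0 /\ 2 <= k))
     -> O_Rk e k = OutM).
Proof.
have [e_conn _] := htree.
split; last split.
- case=> [M4|[M3|[[_ [M3 [M2 k1]]]|[_ [_ [M2 k1]]]]]].
  + exact: (outcome_M4 he_sym he_irr e_conn hnotpath hno2 k M4).
  + exact: (outcome_two_M3 he_sym he_irr e_conn hnotpath hno2 k M3).
  + exact: (outcome_M3_two_M2 he_sym he_irr e_conn hnotpath hno2 M3 M2 k1).
  + exact: (outcome_four_M2 he_sym he_irr e_conn hnotpath hno2 M2 k1).
- case=> [[M4 [M3 [M2 _]]]|[[M4 [M3 k2]]|[M4 [M3 [M2 k1]]]]].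
  + exact: (outcome_one_M3 he_sym he_irr e_conn hnotpath hno2 hter0 hk M4 M3 (or_introl M2)).
  + exact: (outcome_one_M3 he_sym he_irr e_conn hnotpath hno2 hter0 hk M4 M3 (or_intror k2)).
  + exact: (outcome_three_M2 he_sym he_irr e_conn hnotpath hno2 hter0 hk M4 M3 M2 k1).
- case=> [[M4 [M3 [M2 k1]]]|[M4 [M3 [M2 k2]]]].
  + exact: (outcome_two_M2 he_sym he_irr e_conn hnotpath hno2 hter0 hk M4 M3 M2 k1).
  + exact: (outcome_M2_far he_sym he_irr e_conn hnotpath hno2 hter0 hk M4 M3 M2 k2).
Qed.
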